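(* Let $n \geq 3$ and let $k$ be an integer with $0 < k < \frac{n}{2}$. Write points of $\mathbb{R}^n$ as $(x,y)$ with $x \in \mathbb{R}^{n-k}$ and $y \in \mathbb{R}^k$. Let $u$ be a convex function on $\{|x| < 1\} \cap \{|y| < 1\}$ satisfying $\det D^2 u \geq 1$ there, with $u \geq 0$ and $u = 0$ on $\{x = 0\}$. Then there is a constant $c(n) > 0$ such that for all $r < 1$, $$\inf_{|y|<1} \sup_{|x| = r} u(x,y) > c(n)\, r^{2 - \frac{2k}{n}}.$$
   Context: The inequality $\det D^2 u \geq 1$ for a convex function is understood in the weak (Alexandrov/viscosity) sense. *)

From HB Require Import structures.
From mathcomp Require Import all_boot all_order all_algebra.
From mathcomp Require Import all_classical all_reals all_analysis.
Set Implicit Arguments. Unset Strict Implicit. Unset Printing Implicit Defensive.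
Import Order.TTheory GRing.Theory Num.Theory.
Import numFieldNormedType.Exports.
Local Open Scope classical_set_scope.
Local Open Scope ring_scope.

(* Euclidean norm on R^p (the library norm on 'rV is the max norm). *)
Definition enorm (R : realType) (p : nat) (v : 'rV[R]_p) : R :=
  Num.sqrt (\sum_(i < p) v 0 i ^+ 2).

Definition evec (R : realType) (N : nat) (i : 'I_N) : 'rV[R]_N := delta_mx 0 i.

Definition partial (R : realType) (N : nat) (i : 'I_N)
  (f : 'rV[R]_N -> R) (z : 'rV[R]_N) : R := 'D_(evec R i) f z.

Definition C2 (R : realType) (N : nat) (f : 'rV[R]_N -> R) : Prop :=
  continuous f /\
  (forall i z, derivable f z (evec R i)) /\
  (forall i, continuous (partial i f)) /\
  (forall i j z, derivable (partial i f) z (evec R j)) /\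
  (forall i j, continuous (partial j (partial i f))).

Definition hessian (R : realType) (N : nat) (f : 'rV[R]_N -> R)
  (z : 'rV[R]_N) : 'M[R]_N :=
  \matrix_(i, j) partial i (partial j f) z.

Definition convex_on (R : realType) (N : nat) (D : set 'rV[R]_N)
  (u : 'rV[R]_N -> R) : Prop :=
  forall z1 z2 (t : R), D z1 -> D z2 -> 0 <= t <= 1 ->
    u (t *: z1 + (1 - t) *: z2) <= t * u z1 + (1 - t) * u z2.

(* det D^2 u >= 1 in the viscosity sense on the open set D: for every C^2
   test function phi touching u from above at z0 in D, det D^2 phi(z0) >= 1. *)
Definition MA_ge1_visc (R : realType) (N : nat) (D : set 'rV[R]_N)
  (u : 'rV[R]_N -> R) : Prop :=
  forall (z0 : 'rV[R]_N) (phi : 'rV[R]_N -> R),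
    D z0 -> C2 phi -> phi z0 = u z0 ->
    (exists2 e : R, 0 < e &
       forall z, D z -> enorm (z - z0) < e -> u z <= phi z) ->
    1 <= \det (hessian phi z0).

(* The cylinder {|x| < 1} ∩ {|y| < 1} in R^(m+k), points (x,y) = row_mx x y *)
Definition cyl (R : realType) (m k : nat) : set 'rV[R]_(m + k) :=
  [set z | enorm (lsubmx z) < 1 /\ enorm (rsubmx z) < 1].

From HB Require Import structures.
From mathcomp Require Import all_boot all_order all_algebra.
From mathcomp Require Import all_classical all_reals all_analysis.
From mathcomp Require Import ring lra.
Import Order.TTheory GRing.Theory Num.Theory.
Import numFieldNormedType.Exports.
Local Open Scope classical_set_scope.
Local Open Scope ring_scope.
Set Implicit Arguments. Unset Strict Implicit. Unset Printing Implicit Defensive.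

(* Suppose sup_{|x| = r} u(x, y0) <= h for some |y0| < 1.  Convexity in x
   spreads this bound to the ball |x| <= r, and convexity between that ball
   and the axis {x = 0}, where u vanishes, bounds u by h on the ellipsoid
   Q <= 4, with Q(x, y) = 64 |x|^2 / r^2 + 64 |y - y0/2|^2.  There u is
   continuous, so u - 4hQ attains its maximum on the compact set Q <= 1;
   since u <= h, the maximiser satisfies Q <= 1/4, so a vertical shift of the
   paraboloid 4hQ touches u from above at an interior point.  The viscosity
   inequality gives 1 <= det D^2 (4hQ) = (512 h)^n / r^(2(n-k)), that is
   h >= r^(2 - 2k/n) / 512. *)

Section SquaredNorm.
Variables (R : realType) (p : nat).
Implicit Types (v w : 'rV[R]_p).

Definition sqnorm v : R := \sum_(i < p) v 0 i ^+ 2.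

Lemma sqnorm_ge0 v : 0 <= sqnorm v.
Proof. by apply: sumr_ge0 => i _; exact: sqr_ge0. Qed.

Lemma sqnorm0 : sqnorm 0 = 0.
Proof. by rewrite /sqnorm big1 // => i _; rewrite mxE expr0n. Qed.

Lemma sqnormZ (a : R) v : sqnorm (a *: v) = a ^+ 2 * sqnorm v.
Proof. by rewrite /sqnorm mulr_sumr; apply: eq_bigr => i _; rewrite mxE exprMn. Qed.

Lemma sqnormN v : sqnorm (- v) = sqnorm v.
Proof. by apply: eq_bigr => i _; rewrite mxE sqrrN. Qed.

Lemma sqnormD_le v w : sqnorm (v + w) <= 2 * sqnorm v + 2 * sqnorm w.
Proof.
rewrite /sqnorm !mulr_sumr -big_split /=; apply: ler_sum => i _; rewrite mxE.
have := sqr_ge0 (v 0 i - w 0 i); nra.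
Qed.

Lemma sqnorm_eq0 v : sqnorm v = 0 -> v = 0.
Proof.
move/eqP; rewrite psumr_eq0 => [/allP v0|i _]; last exact: sqr_ge0.
apply/matrixP => i j; rewrite ord1 mxE.
by have /implyP/(_ isT) := v0 j (mem_index_enum j); rewrite sqrf_eq0 => /eqP.
Qed.

Lemma enormE v : enorm v = Num.sqrt (sqnorm v).
Proof. by []. Qed.

Lemma enorm_lt1 v : (enorm v < 1) = (sqnorm v < 1).
Proof. by rewrite enormE -{1}sqrtr1 ltr_sqrt // ltr01. Qed.

Lemma enorm_eq v (r : R) : 0 <= r -> (enorm v = r) <-> (sqnorm v = r ^+ 2).
Proof.
move=> r0; rewrite enormE; split => [<-|->]; first by rewrite sqr_sqrtr // sqnorm_ge0.
by rewrite sqrtr_sqr ger0_norm.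
Qed.

Lemma normr_le_enorm v : `|v| <= enorm v.
Proof.
rewrite [leLHS]/Num.norm /= mx_normrE; apply/bigmax_leP; split=> [|[i j] _ /=].
  exact: sqrtr_ge0.
rewrite ord1 -sqrtr_sqr ler_sqrt ?sqnorm_ge0 //.
by rewrite /sqnorm (bigD1 j) //= lerDl sumr_ge0 // => l _; exact: sqr_ge0.
Qed.

End SquaredNorm.

Lemma is_derive_quadratic_line (R : realType) (N : nat) (f : 'rV[R]_N -> R)
    (a v : 'rV[R]_N) (L M : R) :
  (forall h : R, f (h *: v + a) = f a + h * L + h ^+ 2 * M) -> is_derive a v f L.
Proof.
move=> fE.
have quot : (fun h : R => h^-1 *: ((f \o shift a) (h *: v) - f a)) @ 0^' --> L.
  apply: (@cvg_trans _ ((fun h : R => L + h * M) @ 0^')).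
    apply: near_eq_cvg; near=> h.
    have h0 : h != 0 by near: h; exact: nbhs_dnbhs_neq.
    rewrite /= fE /shift /=.
    by apply/esym; rewrite -[_ *: _]/(_ * _); field.
  apply: cvg_within_filter.
  have lim0 : (fun h : R => L + h * M) @ 0 --> L + 0 * M.
    by apply: cvgD; [exact: cvg_cst | apply: cvgM; [exact: cvg_id | exact: cvg_cst]].
  by rewrite mul0r addr0 in lim0.
split; [exact: cvgP quot | exact: cvg_lim quot].
Unshelve. all: by end_near.
Qed.

Section DiagonalQuadratic.
Variables (R : realType) (N : nat).
Implicit Types (c p z v w : 'rV[R]_N).

Definition quad c p z : R := \sum_(i < N) c 0 i * (z 0 i - p 0 i) ^+ 2.

Lemma quad_ge0 c p z : (forall i, 0 <= c 0 i) -> 0 <= quad c p z.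
Proof. by move=> c0; apply: sumr_ge0 => i _; rewrite mulr_ge0 ?sqr_ge0. Qed.

Lemma quadxx c p : quad c p p = 0.
Proof. by rewrite /quad big1 // => i _; rewrite subrr expr0n mulr0. Qed.

Lemma quad_shift c p z : quad c p z = quad c 0 (z - p).
Proof. by apply: eq_bigr => i _; rewrite !mxE subr0. Qed.

Lemma quadZ c t w : quad c 0 (t *: w) = t ^+ 2 * quad c 0 w.
Proof. by rewrite /quad mulr_sumr; apply: eq_bigr => i _; rewrite !mxE !subr0; ring. Qed.

Lemma quadN c w : quad c 0 (- w) = quad c 0 w.
Proof. by apply: eq_bigr => i _; rewrite !mxE !subr0 sqrrN. Qed.

Lemma quadZl (a : R) c p z : quad (a *: c) p z = a * quad c p z.
Proof. by rewrite /quad mulr_sumr; apply: eq_bigr => i _; rewrite mxE mulrA. Qed.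

Lemma quadD_le c p z w : (forall i, 0 <= c 0 i) ->
  quad c p (z + w) <= 2 * quad c p z + 2 * quad c 0 w.
Proof.
move=> c0; rewrite /quad !mulr_sumr -big_split /=; apply: ler_sum => i _.
rewrite !mxE subr0; have := c0 i; have := sqr_ge0 (z 0 i - p 0 i - w 0 i); nra.
Qed.

Lemma sqnorm_le_quad c p z : (forall i, 1 <= c 0 i) -> sqnorm (z - p) <= quad c p z.
Proof.
move=> c1; apply: ler_sum => i _; rewrite !mxE.
by rewrite ler_peMl ?sqr_ge0.
Qed.

Lemma continuous_affine_coord (A : R) p (i : 'I_N) :
  continuous (fun z : 'rV[R]_N => A * (z 0 i - p 0 i)).
Proof.
move=> z; apply: (continuousM (s := cst A) (t := fun z : 'rV[R]_N => z 0 i - p 0 i)).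
  exact: cst_continuous.
by apply: continuousB; [exact: coord_continuous | exact: cst_continuous].
Qed.

Lemma continuous_quad c p : continuous (quad c p).
Proof.
apply: (continuous_big (op := +%R) add_continuous) => i _ z.
apply: (continuousM (s := cst (c 0 i)) (t := fun z => (z 0 i - p 0 i) ^+ 2)).
  exact: cst_continuous.
apply: (continuous_comp (f := fun z : 'rV[R]_N => z 0 i - p 0 i)
                        (g := fun x : R => x ^+ 2)); last exact: exprn_continuous.
by apply: continuousB; [exact: coord_continuous | exact: cst_continuous].
Qed.

Lemma compact_quad_le1 c p : (forall i, 1 <= c 0 i) ->
  compact [set z | quad c p z <= 1].
Proof.
move=> c1; apply: bounded_closed_compact; last first.
  have : closed (quad c p @^-1` [set x | x <= 1]).
    by apply: (continuous_closedP _).1; [exact: continuous_quad | exact: closed_le].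
  by [].
exists (`|p| + 1); split; first exact: num_real.
move=> M pM z /= Qz; apply: ltW; apply: le_lt_trans pM.
rewrite -[z](subrK p) addrC; apply: (le_trans (ler_normD _ _)); rewrite lerD2l.
apply: (le_trans (normr_le_enorm _)); rewrite enormE -sqrtr1 ler_sqrt ?ler01 //.
exact: le_trans (sqnorm_le_quad p z c1) Qz.
Qed.

Lemma evecE (i j : 'I_N) : evec R i 0 j = (j == i)%:R.
Proof. by rewrite /evec mxE eqxx. Qed.

Lemma sum_mul_evec (F : 'I_N -> R) (i : 'I_N) : \sum_(j < N) F j * evec R i 0 j = F i.
Proof.
rewrite (bigD1 i) //= big1 ?addr0 => [|j /negbTE ji]; first by rewrite evecE eqxx mulr1.
by rewrite evecE ji mulr0.
Qed.

Lemma quad_line c p a v (h : R) : quad c p (h *: v + a) =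
  quad c p a + h * (\sum_(i < N) 2 * c 0 i * (a 0 i - p 0 i) * v 0 i) + h ^+ 2 * quad c 0 v.
Proof.
rewrite /quad !mulr_sumr -!big_split /=; apply: eq_bigr => i _; rewrite !mxE; ring.
Qed.

Lemma is_derive_quad c p (d : R) a i :
  is_derive a (evec R i) (fun z => quad c p z + d) (2 * c 0 i * (a 0 i - p 0 i)).
Proof.
apply: (is_derive_quadratic_line (M := c 0 i)) => h.
rewrite quad_line sum_mul_evec.
have -> : quad c 0 (evec R i) = c 0 i.
  rewrite /quad -[RHS](sum_mul_evec (fun j => c 0 j)); apply: eq_bigr => j _.
  by rewrite evecE mxE subr0; case: (j == i); rewrite ?expr1n ?expr0n.
ring.
Qed.

Lemma partial_quad c p (d : R) i :
  partial i (fun z => quad c p z + d) = fun z => 2 * c 0 i * (z 0 i - p 0 i).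
Proof. by apply/funext => z; rewrite /partial; have [_ ->] := is_derive_quad c p d z i. Qed.

Lemma is_derive_affine_coord (A : R) p a (i j : 'I_N) :
  is_derive a (evec R j) (fun z => A * (z 0 i - p 0 i)) (A * (i == j)%:R).
Proof. by apply: (is_derive_quadratic_line (M := 0)) => h; rewrite !mxE eqxx eq_sym; ring. Qed.

Lemma partial2_quad c p (d : R) i j z :
  partial j (partial i (fun z => quad c p z + d)) z = 2 * c 0 i * (i == j)%:R.
Proof.
by rewrite partial_quad /partial; have [_ ->] := is_derive_affine_coord (2 * c 0 i) p z i j.
Qed.

Lemma C2_quad c p (d : R) : C2 (fun z => quad c p z + d).
Proof.
split; first by move=> z; apply: continuousD; [exact: continuous_quad | exact: cst_continuous].
split; first by move=> i z; have [] := is_derive_quad c p d z i.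
split; first by move=> i; rewrite partial_quad; exact: continuous_affine_coord.
split.
  by move=> i j z; rewrite partial_quad; have [] := is_derive_affine_coord (2 * c 0 i) p z i j.
move=> i j.
have -> : partial j (partial i (fun z => quad c p z + d)) = cst (2 * c 0 i * (i == j)%:R).
  by apply/funext => z; rewrite partial2_quad.
exact: cst_continuous.
Qed.

Lemma det_hessian_quad c p (d : R) z :
  \det (hessian (fun z => quad c p z + d) z) = \prod_(i < N) (2 * c 0 i).
Proof.
have -> : hessian (fun z => quad c p z + d) z = diag_mx (\row_i (2 * c 0 i)).
  apply/matrixP => i j; rewrite /hessian !mxE partial2_quad eq_sym.
  by case: (eqVneq i j) => [->|]; rewrite ?mulr1 ?mulr1n ?mulr0 ?mulr0n.
by rewrite det_diag; apply: eq_bigr => i _; rewrite mxE.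
Qed.

End DiagonalQuadratic.

Lemma quad_row_const (R : realType) (m k : nat) (A B : R) (p : 'rV[R]_m)
    (q : 'rV[R]_k) (z : 'rV[R]_(m + k)) :
  quad (row_mx (const_mx A) (const_mx B)) (row_mx p q) z =
  A * sqnorm (lsubmx z - p) + B * sqnorm (rsubmx z - q).
Proof.
rewrite /quad big_split_ord /sqnorm !mulr_sumr.
by congr (_ + _); apply: eq_bigr => i _; rewrite ?row_mxEl ?row_mxEr !mxE.
Qed.

Lemma sqnorm_evec (R : realType) (p : nat) (i : 'I_p) : sqnorm (evec R i) = 1.
Proof.
rewrite /sqnorm; under eq_bigr do rewrite expr2.
by rewrite sum_mul_evec evecE eqxx.
Qed.

Lemma near_enorm_ball (R : realType) (N : nat) (z0 : 'rV[R]_N)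
    (P : 'rV[R]_N -> Prop) :
  (\forall z \near z0, P z) -> exists2 e : R, 0 < e & forall z, enorm (z - z0) < e -> P z.
Proof.
move=> /nbhs_ballP[e e0 ballP]; exists e => // z ze; apply: ballP.
by rewrite -ball_normE /= -normrN opprB; exact: le_lt_trans (normr_le_enorm _) ze.
Qed.

Lemma visc_quad_local_max (R : realType) (N : nat) (D : set 'rV[R]_N) u
    (c p z0 : 'rV[R]_N) :
  MA_ge1_visc D u -> D z0 ->
  (\forall z \near z0, D z -> u z - quad c p z <= u z0 - quad c p z0) ->
  1 <= \prod_(i < N) (2 * c 0 i).
Proof.
move=> u_visc Dz0 /near_enorm_ball[e e0 u_max].
rewrite -(det_hessian_quad c p (u z0 - quad c p z0) z0).
apply: u_visc (C2_quad _ _ _) _ _ => //; first by rewrite addrC subrK.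
by exists e => // z Dz ze; have := u_max z ze Dz; lra.
Qed.

Lemma invr2_itv01 (R : realType) : 0 <= (2^-1 : R) <= 1.
Proof. by apply/andP; split; [rewrite invr_ge0 | rewrite invf_le1 // ler1n]. Qed.

Section ConvexBounds.
Variables (R : realType) (N : nat) (D : set 'rV[R]_N) (u : 'rV[R]_N -> R).
Hypothesis convex_u : convex_on D u.

Lemma convex_increment_bound z w (h t : R) :
  D z -> D (z + w) -> D (z - w) -> D (z + t *: w) -> D (z - t *: w) ->
  u (z + w) <= h -> u (z - w) <= h -> 0 <= u z -> 0 <= t <= 1 ->
  `|u (z + t *: w) - u z| <= t * h.
Proof.
move=> Dz Dzp Dzm Dztp Dztm uzp uzm uz0 t01; have /andP[t0 t1] := t01.
have chord_le v : D (z + v) -> u (z + v) <= h -> u (z + t *: v) <= t * h + (1 - t) * u z.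
  move=> Dzv uzv; have -> : z + t *: v = t *: (z + v) + (1 - t) *: z.
    by apply/matrixP => i j; rewrite !mxE; ring.
  apply: le_trans (convex_u Dzv Dz t01) _.
  by rewrite lerD2r ler_wpM2l.
have up := chord_le w Dzp uzp.
have down := chord_le (- w) Dzm uzm; rewrite scalerN in down.
have mid := convex_u Dztp Dztm (invr2_itv01 R).
rewrite (_ : 2^-1 *: (z + t *: w) + (1 - 2^-1) *: (z - t *: w) = z) in mid; last first.
  by apply/matrixP => i j; rewrite !mxE; field.
rewrite ler_norml; apply/andP; split; [|have := mulr_ge0 t0 uz0]; nra.
Qed.

End ConvexBounds.

Lemma sqnorm_unit_direction (R : realType) (p : nat) (x : 'rV[R]_p) : (0 < p)%N ->
  exists2 e, sqnorm e = 1 & x = Num.sqrt (sqnorm x) *: e.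
Proof.
move=> p0; have [x0|x_neq0] := eqVneq (sqnorm x) 0.
  exists (evec R (Ordinal p0)); first exact: sqnorm_evec.
  by rewrite x0 sqrtr0 scale0r; exact: sqnorm_eq0.
have rho_neq0 : Num.sqrt (sqnorm x) != 0.
  by rewrite sqrtr_eq0 -ltNge lt_def x_neq0 sqnorm_ge0.
exists ((Num.sqrt (sqnorm x))^-1 *: x); last by rewrite scalerA mulfV // scale1r.
by rewrite sqnormZ exprVn sqr_sqrtr ?sqnorm_ge0 // mulVf.
Qed.

Lemma ball_in_sphere_chords (R : realType) (p : nat) (r : R) (x : 'rV[R]_p) :
  (0 < p)%N -> 0 < r -> sqnorm x <= r ^+ 2 ->
  exists x1 x2 t, [/\ sqnorm x1 = r ^+ 2, sqnorm x2 = r ^+ 2, 0 <= t <= 1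
                    & x = t *: x1 + (1 - t) *: x2].
Proof.
move=> p0 r0 xr; have [e e1 xE] := sqnorm_unit_direction x p0.
set rho := Num.sqrt (sqnorm x) in xE.
have rho0 : 0 <= rho := sqrtr_ge0 _.
have rho_le : rho <= r by rewrite /rho -(ger0_norm (ltW r0)) -sqrtr_sqr ler_sqrt ?sqr_ge0.
have rho_r : 0 <= rho / r <= 1.
  by rewrite divr_ge0 ?(ltW r0) //= ler_pdivrMr // mul1r.
exists (r *: e), (- (r *: e)), ((1 + rho / r) / 2); split.
- by rewrite sqnormZ e1 mulr1.
- by rewrite sqnormN sqnormZ e1 mulr1.
- by apply/andP; split; lra.
- by rewrite xE; apply/matrixP => i j; rewrite !mxE; field; rewrite gt_eqF.
Qed.

Lemma convex_le_on_ball (R : realType) (p : nat) (D : set 'rV[R]_p) g (r h : R) :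
  (0 < p)%N -> 0 < r -> convex_on D g ->
  (forall x, sqnorm x = r ^+ 2 -> D x /\ g x <= h) ->
  forall x, sqnorm x <= r ^+ 2 -> g x <= h.
Proof.
move=> p0 r0 g_convex g_sphere x xr.
have [x1 [x2 [t [s1 s2 t01 ->]]]] := ball_in_sphere_chords p0 r0 xr.
have [[D1 g1] [D2 g2]] := (g_sphere _ s1, g_sphere _ s2).
apply: le_trans (g_convex _ _ _ D1 D2 t01) _; have /andP[t0 t1] := t01; nra.
Qed.

Lemma cylE (R : realType) (m k : nat) (z : 'rV[R]_(m + k)) :
  cyl z <-> sqnorm (lsubmx z) < 1 /\ sqnorm (rsubmx z) < 1.
Proof. by rewrite /cyl /= !enorm_lt1. Qed.

Lemma cyl_row_mx (R : realType) (m k : nat) (x : 'rV[R]_m) (y : 'rV[R]_k) :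
  sqnorm x < 1 -> sqnorm y < 1 -> cyl (row_mx x y).
Proof. by move=> x1 y1; apply/cylE; rewrite row_mxKl row_mxKr. Qed.

Lemma convex_on_cyl_slice (R : realType) (m k : nat) (u : 'rV[R]_(m + k) -> R)
    (y : 'rV[R]_k) :
  convex_on (@cyl R m k) u -> sqnorm y < 1 ->
  convex_on [set x | sqnorm x < 1] (fun x => u (row_mx x y)).
Proof.
move=> u_convex y1 x1 x2 t /= x1_lt1 x2_lt1 t01.
have := u_convex _ _ t (cyl_row_mx x1_lt1 y1) (cyl_row_mx x2_lt1 y1) t01.
by rewrite !scale_row_mx add_row_mx -scalerDl [t + _]addrC subrK scale1r.
Qed.

Section SphereBound.
Variables (R : realType) (m k : nat) (u : 'rV[R]_(m + k) -> R).
Hypotheses (m_gt0 : (0 < m)%N) (u_convex : convex_on (@cyl R m k) u)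
  (u_visc : MA_ge1_visc (@cyl R m k) u) (u_ge0 : forall z, cyl z -> 0 <= u z)
  (u_axis : forall y : 'rV[R]_k, enorm y < 1 -> u (row_mx 0 y) = 0).
Variables (r h : R) (y0 : 'rV[R]_k).
Hypotheses (r_gt0 : 0 < r) (r_lt1 : r < 1) (h_gt0 : 0 < h) (y0_lt1 : sqnorm y0 < 1)
  (u_sphere : forall x : 'rV[R]_m, sqnorm x = r ^+ 2 -> u (row_mx x y0) <= h).

Let r2_gt0 : 0 < r ^+ 2. Proof. exact: exprn_gt0. Qed.
Let r2_lt1 : r ^+ 2 < 1. Proof. by rewrite expr_lt1 // ltW. Qed.

Lemma u_slice_ball_le x : sqnorm x <= r ^+ 2 -> u (row_mx x y0) <= h.
Proof.
apply: (convex_le_on_ball m_gt0 r_gt0 (convex_on_cyl_slice u_convex y0_lt1)).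
by move=> x' x'r; split; [rewrite /= x'r | exact: u_sphere].
Qed.

Let y1 := 2^-1 *: y0.
Let center : 'rV[R]_(m + k) := row_mx 0 y1.
Let weights : 'rV[R]_(m + k) := row_mx (const_mx (64 / r ^+ 2)) (const_mx 64).
Let Q := quad weights center.

Lemma weights_ge1 i : 1 <= weights 0 i.
Proof.
rewrite mxE; case: splitP => j _; rewrite mxE ?ler1n //.
by rewrite ler_pdivlMr // mul1r; have := r2_lt1; lra.
Qed.

Lemma weights_ge0 i : 0 <= weights 0 i.
Proof. exact: le_trans ler01 (weights_ge1 i). Qed.

Lemma QE z : Q z = 64 / r ^+ 2 * sqnorm (lsubmx z) + 64 * sqnorm (rsubmx z - y1).
Proof. by rewrite /Q quad_row_const subr0. Qed.

Lemma sqnorm_y1 : sqnorm y1 = sqnorm y0 / 4.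
Proof. by rewrite sqnormZ; field. Qed.

Lemma u_center : u center = 0.
Proof. by apply: u_axis; rewrite enorm_lt1 sqnorm_y1; have := y0_lt1; lra. Qed.

Lemma Q_le4_coords z : Q z <= 4 ->
  sqnorm (lsubmx z) <= r ^+ 2 / 16 /\ sqnorm (rsubmx z - y1) <= 1 / 16.
Proof.
rewrite QE => Qz; have := sqnorm_ge0 (rsubmx z - y1); have := r2_gt0.
have : 0 <= 64 / r ^+ 2 * sqnorm (lsubmx z) by rewrite mulr_ge0 ?sqnorm_ge0 // divr_ge0 // ltW.
have : 64 / r ^+ 2 * r ^+ 2 = 64 by rewrite mulfVK // gt_eqF.
split; nra.
Qed.

(* z is the midpoint of (2 x, y0), in the slice ball, and (0, 2 (y - y0/2)), on the axis. *)
Lemma Q_le4_bound z : Q z <= 4 -> cyl z /\ u z <= h.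
Proof.
move=> /Q_le4_coords[x_small y_small].
move: r2_gt0 r2_lt1 y0_lt1 h_gt0 => r2_0 r2_1 y0_1 h0.
have u_left : u (row_mx (2 *: lsubmx z) y0) <= h.
  by apply: u_slice_ball_le; rewrite sqnormZ; lra.
have u_right : u (row_mx 0 (2 *: (rsubmx z - y1))) = 0.
  by apply: u_axis; rewrite enorm_lt1 sqnormZ; lra.
have cyl_left : cyl (row_mx (2 *: lsubmx z) y0).
  by apply: cyl_row_mx => //; rewrite sqnormZ; nra.
have cyl_right : cyl (row_mx (0 : 'rV_m) (2 *: (rsubmx z - y1))).
  by apply: cyl_row_mx; rewrite ?sqnorm0 ?sqnormZ; lra.
split.
  apply/cylE; split; first nra.
  have := sqnormD_le (rsubmx z - y1) y1; rewrite subrK sqnorm_y1; lra.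
have := u_convex cyl_left cyl_right (invr2_itv01 R).
rewrite !scale_row_mx add_row_mx scaler0 addr0 (_ : row_mx _ _ = z); last first.
  rewrite -[RHS]hsubmxK /y1.
  by congr row_mx; apply/matrixP => i j; rewrite !mxE; field.
rewrite u_right mulr0 addr0; lra.
Qed.

Lemma Q_add_bound z w :
  Q z <= 1 -> quad weights 0 w <= 1 -> cyl (z + w) /\ u (z + w) <= h.
Proof.
move=> Qz Qw; apply: Q_le4_bound.
by have := quadD_le center z w weights_ge0; rewrite -/Q; lra.
Qed.

Lemma u_increment_le z w t : Q z <= 1 -> quad weights 0 w <= 1 -> 0 <= t <= 1 ->
  `|u (z + t *: w) - u z| <= t * h.
Proof.
move=> Qz Qw t01; have /andP[t0 t1] := t01.
have Qtw : quad weights 0 (t *: w) <= 1.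
  rewrite quadZ; have := quad_ge0 0 w weights_ge0; have : t ^+ 2 <= 1 by rewrite expr_le1.
  nra.
have [cz _] : cyl z /\ u z <= h by apply: Q_le4_bound; lra.
have [czp uzp] := Q_add_bound Qz Qw.
have [czm uzm] : cyl (z - w) /\ u (z - w) <= h by apply: Q_add_bound; rewrite ?quadN.
have [cztp _] := Q_add_bound Qz Qtw.
have [cztm _] : cyl (z - t *: w) /\ u (z - t *: w) <= h.
  by apply: Q_add_bound; rewrite ?quadN.
by apply: (convex_increment_bound u_convex) => //; exact: u_ge0.
Qed.

Lemma u_continuous_at z : Q z <= 1 -> {for z, continuous u}.
Proof.
move=> Qz; apply/(@cvgrPdist_le _ _ _ (nbhs z) (nbhs_filter z)) => e e0; have h0 := h_gt0.
set t := Num.min (e / h) 1.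
have t0 : 0 < t by rewrite lt_min divr_gt0 // ltr01.
have t1 : t <= 1 by rewrite ge_min lexx orbT.
have th : t * h <= e by rewrite -ler_pdivlMr // ge_min lexx.
have near_z : \forall y \near z, `|quad weights z z - quad weights z y| < t ^+ 2.
  by move: (@continuous_quad R _ weights z z) => /cvgrPdist_lt/(_ _ (exprn_gt0 2 t0)).
apply: filterS near_z => y.
rewrite quadxx sub0r normrN ger0_norm => [zy|]; last exact: quad_ge0 weights_ge0.
have Qw : quad weights 0 (t^-1 *: (y - z)) <= 1.
  rewrite quadZ -quad_shift exprVn -ler_pdivlMl ?invr_gt0 ?exprn_gt0 // invrK mulr1.
  exact: ltW.
have t01 : 0 <= t <= 1 by rewrite ltW.
have := u_increment_le Qz Qw t01.
rewrite scalerA mulfV ?gt_eqF // scale1r [z + _]addrC subrK distrC => uyz.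
exact: le_trans uyz th.
Qed.

Lemma u_sub_paraboloid_max : exists2 z0, Q z0 <= 1 &
  forall z, Q z <= 1 -> u z - 4 * h * Q z <= u z0 - 4 * h * Q z0.
Proof.
have K0 : [set z | Q z <= 1] !=set0 by exists center; rewrite /= /Q quadxx ler01.
have f_cont : {within [set z | Q z <= 1], continuous (fun z => u z - 4 * h * Q z)}.
  apply: continuous_in_subspaceT => z /set_mem Qz.
  apply: (continuousB (f := u) (g := fun z => 4 * h * Q z)); first exact: u_continuous_at.
  apply: (continuousM (s := cst (4 * h)) (t := Q)); first exact: cst_continuous.
  exact: continuous_quad.
have K_compact := compact_quad_le1 (p := center) weights_ge1.
have [z0 /set_mem Qz0 z0_max] := EVT_max_rV K0 K_compact f_cont.
by exists z0 => // z Qz; apply: z0_max; exact: mem_set.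
Qed.

Lemma prod_hessian_ge1 : 1 <= \prod_(i < m + k) (2 * (4 * h *: weights) 0 i).
Proof.
have [z0 Qz0 z0_max] := u_sub_paraboloid_max.
have [cz0 uz0] : cyl z0 /\ u z0 <= h by apply: Q_le4_bound; lra.
have Qz0_small : Q z0 <= 1 / 4.
  have := z0_max center; rewrite /Q quadxx -/Q u_center ler01 => /(_ isT).
  have := h_gt0; nra.
apply: (visc_quad_local_max (p := center) u_visc cz0).
have near_z0 : \forall z \near z0, `|quad weights z0 z0 - quad weights z0 z| < 1 / 4.
  by move: (@continuous_quad R _ weights z0 z0) => /cvgrPdist_lt; apply; rewrite divr_gt0.
apply: filterS near_z0 => z.
rewrite quadxx sub0r normrN ger0_norm => [z0z _|]; last exact: quad_ge0 weights_ge0.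
have Qz : Q z <= 1.
  have := quadD_le center z0 (z - z0) weights_ge0.
  by rewrite [z0 + _]addrC subrK -quad_shift -/Q; lra.
by rewrite !quadZl -/Q; have := z0_max z Qz; lra.
Qed.

Lemma sphere_bound_power : r ^+ (2 * m) <= (512 * h) ^+ (m + k).
Proof.
have := prod_hessian_ge1; rewrite big_split_ord /=.
under eq_bigr do rewrite mxE row_mxEl mxE.
under [X in _ * X]eq_bigr do rewrite mxE row_mxEr mxE.
rewrite !prodr_const !card_ord.
have -> : 2 * (4 * h * (64 / r ^+ 2)) = 512 * h / r ^+ 2.
  by field; rewrite gt_eqF.
rewrite (_ : 2 * (4 * h * 64) = 512 * h); last by ring.
by rewrite expr_div_n mulrAC -exprD ler_pdivlMr ?exprn_gt0 // mul1r exprM.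
Qed.

End SphereBound.

Lemma powR_exponent_pow (R : realType) (n k : nat) (r : R) : 0 <= r -> (0 < n)%N ->
  (k <= n)%N -> (r `^ (2 - 2 * k%:R / n%:R)) ^+ n = r ^+ (2 * (n - k)).
Proof.
move=> r0 n0 kn; rewrite -powR_mulrn ?powR_ge0 // -powRrM -powR_mulrn //.
by congr (r `^ _); rewrite natrM natrB //; field; rewrite pnatr_eq0 -lt0n.
Qed.

Theorem lemma3p2 (R : realType) (n : nat) : (3 <= n)%N ->
  exists2 c : R, 0 < c &
  forall (k : nat), (0 < k)%N -> (k.*2 < n)%N ->
  forall u : 'rV[R]_(n - k + k) -> R,
    convex_on (@cyl R (n - k) k) u ->
    MA_ge1_visc (@cyl R (n - k) k) u ->
    (forall z, @cyl R (n - k) k z -> 0 <= u z) ->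
    (forall y : 'rV[R]_k, enorm y < 1 -> u (row_mx 0 y) = 0) ->
    forall r : R, 0 < r -> r < 1 ->
      ((c * powR r (2 - 2 * k%:R / n%:R))%:E <
       ereal_inf [set ereal_sup [set (u (row_mx x y))%:E |
                                   x in [set x : 'rV[R]_(n - k) | (enorm x = r)%R]]
                 | y in [set y : 'rV[R]_k | (enorm y < 1)%R]])%E.
Proof.
move=> n3; exists (1 / 2048); first by rewrite divr_gt0 ?ltr0n.
move=> k k0 kn u u_convex u_visc u_ge0 u_axis r r0 r1.
have kn' : (k <= n)%N by apply: leq_trans (ltnW kn); rewrite -addnn leq_addl.
have m_gt0 : (0 < n - k)%N.
  by rewrite subn_gt0; apply: leq_ltn_trans kn; rewrite -addnn leq_addl.
set g := powR r _; set S := ereal_inf _.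
have g0 : 0 < g by rewrite powR_gt0.
rewrite ltNge; apply/negP => S_le.
have /ereal_inf_lt[_ [y0 y0_lt1 <-] sup_lt] : (S < (g / 1024)%:E)%E.
  by apply: le_lt_trans S_le _; rewrite lte_fin; lra.
have u_sphere x : sqnorm x = r ^+ 2 -> u (row_mx x y0) <= g / 1024.
  move=> xr; rewrite -lee_fin; apply/ltW/(le_lt_trans _ sup_lt).
  by apply: ereal_sup_ubound; exists x => //; apply/enorm_eq => //; exact: ltW.
have h0 : 0 < g / 1024 by rewrite divr_gt0 ?ltr0n.
have y0_sq : sqnorm y0 < 1 by rewrite -enorm_lt1.
have := sphere_bound_power m_gt0 u_convex u_visc u_ge0 u_axis r0 r1 h0 y0_sq u_sphere.
rewrite subnK // (_ : 512 * (g / 1024) = g / 2); last by field.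
have n_gt0 : (0 < n)%N by apply: leq_trans n3.
rewrite expr_div_n (powR_exponent_pow (ltW r0) n_gt0 kn').
rewrite ler_pdivlMr ?exprn_gt0 // ger_pMr ?exprn_gt0 //.
by rewrite leNgt exprn_egt1 ?ltr1n // -lt0n n_gt0.
Qed.
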